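(* Let $q\in(0,1]$. For $\nu\in\mathfrak h^*$ and $\lambda\in P_+$, \[ \varphi^\nu_q(\lambda) = \frac{\varphi^\nu_1(q^{2\lambda+2\rho})}{\varphi^\nu_1(q^{2\rho})}, \] as an identity of the defining formulas (valid for generic $\nu$, i.e. whenever no denominator vanishes, and in general by analytic continuation in $\nu$).
   Context: $K$ is a connected simply connected compact simple Lie group with complexification $G=KAN$ (Iwasawa decomposition), $\mathfrak h$ a Cartan subalgebra, $\Delta_+$ positive roots, $W$ the Weyl group with length function $l$, $P_+$ dominant weights, $\rho=\frac12\sum_{\alpha\in\Delta_+}\alpha$, $(\cdot,\cdot)$ the invariant form normalized by $(\alpha,\alpha)=2$ for short roots. For $\mu\in\mathfrak h^*_{\mathbb{R}}$, $q^\mu\in A$. Define $A_\nu(q^\mu)=\sum_{w\in W}(-1)^{l(w)}q^{(\mu,w\nu)}$, $\chi_\nu(q^\mu)=A_{\nu+\rho}(q^\mu)/A_\rho(q^\mu)$ (analytic continuation of the Weyl character formula), with $\chi_\nu(1)=\prod_{\alpha\in\Delta_+}(\nu+\rho,\alpha)/\prod_{\alpha\in\Delta_+}(\rho,\alpha)$. Set $\varphi^\nu_1(q^\mu)=\chi_{\frac12\nu-\rho}(q^\mu)/\chi_{\frac12\nu-\rho}(1)$ and $\varphi^\nu_q(\lambda)=\chi_\lambda(q^\nu)/\chi_\lambda(q^{2\rho})$ for $\lambda\in P_+$. *)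

From mathcomp Require Import all_boot all_order all_algebra.
From mathcomp Require Import reals sequences exp trigo.
From mathcomp Require Import complex.

Set Implicit Arguments.
Unset Strict Implicit.
Unset Printing Implicit Defensive.

Import Order.TTheory GRing.Theory Num.Theory.
Local Open Scope ring_scope.
Local Open Scope complex_scope.

(* Real Cartan subalgebra  h*_R  =  R^n  (row vectors), equipped with the    *)
(* invariant form, realised in orthonormal coordinates as the dot product.  *)
(* The complexification h* = C^n with C = R[i], the form being extended     *)
(* C-bilinearly.                                                             *)

Definition dotv (R : realType) (n : nat) (u v : 'rV[R]_n) : R := (u *m v^T) 0 0.

Definition cdotv (R : realType) (n : nat) (u v : 'rV[R[i]]_n) : R[i] :=
  (u *m v^T) 0 0.

Definition toCv (R : realType) (n : nat) (v : 'rV[R]_n) : 'rV[R[i]]_n :=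
  map_mx (fun x : R => x%:C) v.
Definition toCm (R : realType) (n : nat) (w : 'M[R]_n) : 'M[R[i]]_n :=
  map_mx (fun x : R => x%:C) w.

(* Orthogonal reflection in the hyperplane orthogonal to a; acting on row
   vectors on the right:  v *m reflmx a = v - (2 (v,a)/(a,a)) a. *)
Definition reflmx (R : realType) (n : nat) (a : 'rV[R]_n) : 'M[R]_n :=
  1%:M - (2 / dotv a a) *: (a^T *m a).

Definition rows_mx (R : realType) (n : nat) (s : seq 'rV[R]_n) :
  'M[R]_(size s, n) := \matrix_(i < size s, j < n) (nth 0 s i) 0 j.

(* Reduced, crystallographic, irreducible root system in R^n (spanning R^n,
   i.e. the root system of a compact simple Lie algebra with Cartan
   subalgebra of dimension n), with the invariant form normalised so that
   short roots have (a,a) = 2. *)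
Definition simple_root_system (R : realType) (n : nat) (Phi : seq 'rV[R]_n)
  : Prop :=
  [/\ uniq Phi, Phi != [::], (0 : 'rV[R]_n) \notin Phi &
      \rank (rows_mx Phi) = n] /\
      (forall a b, a \in Phi -> b \in Phi -> b *m reflmx a \in Phi) /\
      (forall a b, a \in Phi -> b \in Phi ->
          exists z : int, 2 * dotv b a / dotv a a = z%:~R) /\
      (forall a (c : R), a \in Phi -> c *: a \in Phi -> c = 1 \/ c = -1) /\
      (forall P : pred 'rV[R]_n,
          (forall a b, a \in Phi -> b \in Phi -> P a -> ~~ P b -> dotv a b = 0)
          -> all P Phi \/ all (predC P) Phi) /\
      (forall a, a \in Phi -> 2 <= dotv a a) /\
      (exists2 a, a \in Phi & dotv a a = 2).

Definition positive_system (R : realType) (n : nat) (Phi Pos : seq 'rV[R]_n)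
  : Prop :=
  uniq Pos /\
  exists v : 'rV[R]_n, (forall a, a \in Phi -> dotv a v != 0) /\
    (forall a, (a \in Pos) = (a \in Phi) && (0 < dotv a v)).

Definition is_weyl (R : realType) (n : nat) (Phi : seq 'rV[R]_n) (w : 'M[R]_n)
  : Prop :=
  exists s : seq 'rV[R]_n, all (mem Phi) s /\ w = \prod_(a <- s) reflmx a.

Definition weyl_enum (R : realType) (n : nat) (Phi : seq 'rV[R]_n)
  (Wl : seq 'M[R]_n) : Prop :=
  uniq Wl /\ forall w, w \in Wl <-> is_weyl Phi w.

(* length l(w) = number of positive roots sent to negative roots by w *)
Definition wlen (R : realType) (n : nat) (Pos : seq 'rV[R]_n) (w : 'M[R]_n)
  : nat := count (fun a => - (a *m w) \in Pos) Pos.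

Definition dominant (R : realType) (n : nat) (Pos : seq 'rV[R]_n)
  (lam : 'rV[R]_n) : Prop :=
  forall a, a \in Pos -> exists k : nat, 2 * dotv lam a / dotv a a = k%:R.

Definition rho (R : realType) (n : nat) (Pos : seq 'rV[R]_n) : 'rV[R]_n :=
  2^-1 *: \sum_(a <- Pos) a.

Definition qpow (R : realType) (q : R) (z : R[i]) : R[i] :=
  (expR (complex.Re z * ln q))%:C *
  ((cos (complex.Im z * ln q))%:C + 'i * (sin (complex.Im z * ln q))%:C).

(* A_nu(q^mu) = sum_{w in W} (-1)^{l(w)} q^{(mu, w nu)} *)
Definition Aq (R : realType) (n : nat) (Pos : seq 'rV[R]_n) (Wl : seq 'M[R]_n)
  (q : R) (nu mu : 'rV[R[i]]_n) : R[i] :=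
  \sum_(w <- Wl) (-1) ^+ (wlen Pos w) * qpow q (cdotv mu (nu *m toCm w)).

(* chi_nu(q^mu) = A_{nu+rho}(q^mu) / A_rho(q^mu) *)
Definition chiq (R : realType) (n : nat) (Pos : seq 'rV[R]_n)
  (Wl : seq 'M[R]_n) (q : R) (nu mu : 'rV[R[i]]_n) : R[i] :=
  Aq Pos Wl q (nu + toCv (rho Pos)) mu / Aq Pos Wl q (toCv (rho Pos)) mu.

(* chi_nu(1) given by the Weyl dimension formula *)
Definition chi1 (R : realType) (n : nat) (Pos : seq 'rV[R]_n)
  (nu : 'rV[R[i]]_n) : R[i] :=
  (\prod_(a <- Pos) cdotv (nu + toCv (rho Pos)) (toCv a)) /
  (\prod_(a <- Pos) cdotv (toCv (rho Pos)) (toCv a)).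

(* phi^nu_1(q^mu) = chi_{nu/2 - rho}(q^mu) / chi_{nu/2 - rho}(1) *)
Definition phi1 (R : realType) (n : nat) (Pos : seq 'rV[R]_n)
  (Wl : seq 'M[R]_n) (q : R) (nu mu : 'rV[R[i]]_n) : R[i] :=
  chiq Pos Wl q (2^-1 *: nu - toCv (rho Pos)) mu /
  chi1 Pos (2^-1 *: nu - toCv (rho Pos)).

(* phi^nu_q(lambda) = chi_lambda(q^nu) / chi_lambda(q^{2 rho}) *)
Definition phiq (R : realType) (n : nat) (Pos : seq 'rV[R]_n)
  (Wl : seq 'M[R]_n) (q : R) (nu : 'rV[R[i]]_n) (lam : 'rV[R]_n) : R[i] :=
  chiq Pos Wl q (toCv lam) nu / chiq Pos Wl q (toCv lam) (toCv (2 *: rho Pos)).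

From mathcomp Require Import all_boot all_order all_algebra.
From mathcomp Require Import reals sequences exp trigo.
From mathcomp Require Import complex.
From mathcomp Require Import ring.
Import Order.TTheory GRing.Theory Num.Theory.
Local Open Scope ring_scope.
Local Open Scope complex_scope.

Set Implicit Arguments.
Unset Strict Implicit.

(* The alternating sum A_nu(q^mu) is symmetric in nu and mu, because W is
   closed under w |-> w^-1 = w^T and l(w^-1) = l(w); moreover a scalar can be
   moved from nu to mu.  Hence phi^nu_1(q^(2 mu)) = A_mu(q^nu) / (A_mu(q^(2 rho))
   chi(1)), and the quotient of these values at mu = lambda + rho and
   mu = rho is chi_lambda(q^nu) / chi_lambda(q^(2 rho)). *)

Lemma divf_ratio (F : fieldType) (a b c d k : F) :
  b != 0 -> c != 0 -> d != 0 -> k != 0 ->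
  a / b / (c / d) = a / c / k / (b / d / k).
Proof.
move=> b_neq0 c_neq0 d_neq0 k_neq0.
by field; rewrite b_neq0 c_neq0 d_neq0 k_neq0.
Qed.

Section Reflections.
Variables (R : realType) (n : nat).

Lemma trmx_reflmx (a : 'rV[R]_n) : (reflmx a)^T = reflmx a.
Proof. by rewrite /reflmx linearB /= trmx1 linearZ /= trmx_mul trmxK. Qed.

Lemma reflmxK (a : 'rV[R]_n) : dotv a a != 0 -> reflmx a *m reflmx a = 1%:M.
Proof.
move=> a_neq0; rewrite /reflmx; set c := 2 / dotv a a.
have idem : (a^T *m a) *m (a^T *m a) = dotv a a *: (a^T *m a).
  by rewrite mulmxA -(mulmxA a^T) [a *m a^T]mx11_scalar mul_mx_scalar -scalemxAl.
rewrite mulmxBl mul1mx mulmxBr mulmx1 -scalemxAl -scalemxAr idem !scalerA.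
have -> : c * c * dotv a a = c * 2 by rewrite -mulrA /c mulfVK.
by apply/matrixP=> i j; rewrite !mxE; ring.
Qed.

Lemma toCvD (u v : 'rV[R]_n) : toCv (u + v) = toCv u + toCv v.
Proof. by apply/matrixP=> i j; rewrite !mxE /= rmorphD. Qed.

Lemma toCvZ (c : R) (v : 'rV[R]_n) : toCv (c *: v) = c%:C *: toCv v.
Proof. by apply/matrixP=> i j; rewrite !mxE /= rmorphM. Qed.

Lemma cdotv_mulmx_trmx (x y : 'rV[R[i]]_n) (w : 'M[R]_n) :
  cdotv x (y *m toCm w^T) = cdotv y (x *m toCm w).
Proof.
have entry_trmx (M : 'M[R[i]]_1) : M 0 0 = M^T 0 0 by rewrite mxE.
rewrite /cdotv /toCm -map_trmx [LHS]entry_trmx.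
by rewrite !trmx_mul !trmxK mulmxA.
Qed.

Lemma cdotvZ_mulmx (c : R[i]) (x y : 'rV[R[i]]_n) (w : 'M[R]_n) :
  cdotv y ((c *: x) *m toCm w) = cdotv (c *: y) (x *m toCm w).
Proof. by rewrite /cdotv -scalemxAl linearZ /= -scalemxAr -scalemxAl. Qed.

End Reflections.

Section WeylGroup.
Variables (R : realType) (n : nat) (Phi Pos : seq 'rV[R]_n).
Hypothesis roots_anisotropic : forall a, a \in Phi -> dotv a a != 0.
Hypothesis Pos_uniq : uniq Pos.

Lemma is_weyl_trmx (w : 'M[R]_n) : is_weyl Phi w -> is_weyl Phi w^T.
Proof.
case=> s [s_roots ->]; exists (rev s); split; first by rewrite all_rev.
elim: s {s_roots} => [|a s IHs]; first by rewrite !big_nil trmx1.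
by rewrite rev_cons big_rcons big_cons -!mulmxE trmx_mul IHs trmx_reflmx.
Qed.

Lemma weyl_orthogonal (w : 'M[R]_n) : is_weyl Phi w -> w *m w^T = 1%:M.
Proof.
case=> s [+ ->]; elim: s => [|a s IHs]; first by rewrite big_nil trmx1 mulmx1.
rewrite big_cons /= => /andP [a_root s_roots]; rewrite -mulmxE trmx_mul.
rewrite mulmxA -(mulmxA (reflmx a)) IHs // mulmx1 trmx_reflmx.
exact: reflmxK (roots_anisotropic a_root).
Qed.

Lemma wlen_le_trmx (w : 'M[R]_n) :
  w *m w^T = 1%:M -> (wlen Pos w <= wlen Pos w^T)%N.
Proof.
move=> w_orth; rewrite /wlen -!size_filter.
have act_inj : injective (fun a : 'rV[R]_n => - (a *m w)).
  move=> a b /= /oppr_inj e.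
  by rewrite -(mulmx1 a) -(mulmx1 b) -w_orth !mulmxA e.
rewrite -(size_map (fun a : 'rV[R]_n => - (a *m w))).
apply: uniq_leq_size; first by rewrite (map_inj_uniq act_inj) filter_uniq.
move=> b /mapP [a]; rewrite mem_filter => /andP [a_neg a_pos] ->.
by rewrite mem_filter a_neg andbT mulNmx -mulmxA w_orth mulmx1 opprK.
Qed.

Lemma wlen_trmx (w : 'M[R]_n) :
  w *m w^T = 1%:M -> wlen Pos w^T = wlen Pos w.
Proof.
move=> w_orth; apply/eqP; rewrite eqn_leq wlen_le_trmx // andbT.
by rewrite -{2}(trmxK w) wlen_le_trmx // trmxK; apply: mulmx1C.
Qed.

Variable Wl : seq 'M[R]_n.
Hypothesis Wl_enum : weyl_enum Phi Wl.

Lemma weyl_enum_perm_trmx : perm_eq Wl (map trmx Wl).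
Proof.
have [Wl_uniq memWl] := Wl_enum.
apply: uniq_perm => //; first by rewrite (map_inj_uniq (@trmx_inj _ _ _)).
move=> w; rewrite -{2}(trmxK w) (mem_map (@trmx_inj _ _ _)).
by apply/idP/idP => /memWl /is_weyl_trmx /memWl; rewrite ?trmxK.
Qed.

Variable q : R.

Lemma AqC (x y : 'rV[R[i]]_n) : Aq Pos Wl q x y = Aq Pos Wl q y x.
Proof.
rewrite /Aq [in RHS](perm_big _ weyl_enum_perm_trmx) big_map.
apply: eq_big_seq => w /(proj2 Wl_enum) w_weyl.
by rewrite wlen_trmx ?cdotv_mulmx_trmx // weyl_orthogonal.
Qed.

Lemma AqZ (c : R[i]) (x y : 'rV[R[i]]_n) :
  Aq Pos Wl q (c *: x) y = Aq Pos Wl q x (c *: y).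
Proof. by apply: eq_bigr => w _; rewrite cdotvZ_mulmx. Qed.

Lemma AqVZ (c : R[i]) (x y : 'rV[R[i]]_n) :
  c != 0 -> Aq Pos Wl q (c^-1 *: x) (c *: y) = Aq Pos Wl q x y.
Proof. by move=> c_neq0; rewrite AqZ scalerA mulVf // scale1r. Qed.

Lemma phi1_double (nu : 'rV[R[i]]_n) (mu : 'rV[R]_n) :
  phi1 Pos Wl q nu (toCv (2 *: mu)) =
  Aq Pos Wl q (toCv mu) nu / Aq Pos Wl q (toCv mu) (toCv (2 *: rho Pos)) /
  chi1 Pos (2^-1 *: nu - toCv (rho Pos)).
Proof.
have toCv2 (v : 'rV[R]_n) : toCv (2 *: v) = 2 *: toCv v.
  by rewrite toCvZ rmorph_nat.
have two_neq0 : (2 : R[i]) != 0 by rewrite pnatr_eq0.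
have A_num : Aq Pos Wl q (2^-1 *: nu) (toCv (2 *: mu)) = Aq Pos Wl q (toCv mu) nu.
  by rewrite (toCv2 mu) (AqVZ _ _ two_neq0) AqC.
have A_den : Aq Pos Wl q (toCv (rho Pos)) (toCv (2 *: mu)) =
             Aq Pos Wl q (toCv mu) (toCv (2 *: rho Pos)).
  by rewrite (toCv2 mu) (toCv2 (rho Pos)) -[LHS]AqZ [LHS]AqC.
by rewrite /phi1 /chiq subrK A_num A_den.
Qed.

End WeylGroup.

Theorem proposition4p3 (R : realType) (n : nat)
  (Phi Pos : seq 'rV[R]_n) (Wl : seq 'M[R]_n) (q : R)
  (nu : 'rV[R[i]]_n) (lam : 'rV[R]_n) :
  simple_root_system Phi ->
  positive_system Phi Pos ->
  weyl_enum Phi Wl ->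
  0 < q <= 1 ->
  dominant Pos lam ->
  (* genericity: none of the denominators in the defining formulas vanish *)
  let rC := toCv (rho Pos) in
  let lC := toCv lam in
  Aq Pos Wl q rC nu != 0 ->
  Aq Pos Wl q rC (toCv (2 *: rho Pos)) != 0 ->
  chiq Pos Wl q lC (toCv (2 *: rho Pos)) != 0 ->
  Aq Pos Wl q rC (toCv (2 *: (lam + rho Pos))) != 0 ->
  \prod_(a <- Pos) cdotv rC (toCv a) != 0 ->
  chi1 Pos (2^-1 *: nu - rC) != 0 ->
  phi1 Pos Wl q nu (toCv (2 *: rho Pos)) != 0 ->
  phiq Pos Wl q nu lam =
  phi1 Pos Wl q nu (toCv (2 *: (lam + rho Pos))) /
  phi1 Pos Wl q nu (toCv (2 *: rho Pos)).
Proof.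
move=> root_sys [Pos_uniq _] Wl_enum _ _ rC lC Arho_nu Arho_2rho chi_2rho _ _
  chi1_neq0 _.
have roots_anisotropic : forall a, a \in Phi -> dotv a a != 0.
  case: root_sys => _ [_ [_ [_ [_ [long _]]]]] a /long a_long.
  by rewrite gt_eqF // (lt_le_trans _ a_long).
have Alam_2rho : Aq Pos Wl q (lC + rC) (toCv (2 *: rho Pos)) != 0.
  by apply: contraNneq chi_2rho; rewrite /chiq => ->; rewrite mul0r.
rewrite /phiq !(phi1_double roots_anisotropic Pos_uniq Wl_enum) toCvD /chiq.
exact: divf_ratio Arho_nu Alam_2rho Arho_2rho chi1_neq0.
Qed.
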